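(* Suppose $x,x'\in(0,1)$ and $y\in(x,1)$. Let $y'\in(x',1)$ be such that $p_{x',1}(y')=p_{x,1}(y)$. Then $$p_{1,0}(x')-p_{1,0}(x)=p_{y',0}(x')-p_{y,0}(x).$$
   Context: For real $p\neq q$ and $w$ strictly between $p$ and $q$ (oriented interval $(p,q)$, $p>q$ allowed), $p_{p,q}(w)=\ln\frac{w-p}{q-w}$. *)

From Stdlib Require Import Reals.
Open Scope R_scope.

(* p_{p,q}(w) = ln ((w - p) / (q - w)), meaningful for w strictly between
   p and q (oriented interval, p > q allowed). *)
Definition pcoord (p q w : R) : R := ln ((w - p) / (q - w)).

From Stdlib Require Import Reals Lra.
Open Scope R_scope.

(* Both sides of the identity are of the form p_{1,0}(x) - p_{y,0}(x)
   = ln ((1 - x) / (y - x)), and (1 - x) / (y - x) = 1 + exp (- p_{x,1}(y)).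
   So each side depends only on p_{x,1}(y), which the hypothesis makes equal. *)

Lemma exp_pcoord (p q w : R) :
  0 < (w - p) / (q - w) -> exp (pcoord p q w) = (w - p) / (q - w).
Proof. intro Hpos; unfold pcoord; exact (exp_ln _ Hpos). Qed.

Lemma pcoord_sub_common_end (a b c w : R) :
  0 < (w - a) / (c - w) -> 0 < (w - b) / (c - w) ->
  pcoord a c w - pcoord b c w = ln ((w - a) / (w - b)).
Proof.
intros Ha Hb; unfold pcoord, Rminus at 1.
rewrite <- ln_Rinv, <- ln_mult by auto using Rinv_0_lt_compat.
f_equal; unfold Rdiv in *.
assert (Hcw : c - w <> 0) by (intro E; rewrite E, Rinv_0, Rmult_0_r in Ha; lra).
assert (Hwb : w - b <> 0) by (intro E; rewrite E, Rmult_0_l in Hb; lra).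
field; auto.
Qed.

Lemma pcoord_sub_eq_ln_1_plus_exp (x y : R) :
  0 < x -> x < y < 1 ->
  pcoord 1 0 x - pcoord y 0 x = ln (1 + exp (- pcoord x 1 y)).
Proof.
intros Hx Hy.
assert (Hxy : 0 < (y - x) / (1 - y)) by (apply Rdiv_lt_0_compat; lra).
rewrite pcoord_sub_common_end.
- rewrite exp_Ropp, exp_pcoord by exact Hxy.
  f_equal; field; lra.
- replace ((x - 1) / (0 - x)) with ((1 - x) / x) by (field; lra).
  apply Rdiv_lt_0_compat; lra.
- replace ((x - y) / (0 - x)) with ((y - x) / x) by (field; lra).
  apply Rdiv_lt_0_compat; lra.
Qed.

Theorem proposition2p5 (x x' y y' : R) :
  0 < x < 1 -> 0 < x' < 1 -> x < y < 1 -> x' < y' < 1 ->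
  pcoord x' 1 y' = pcoord x 1 y ->
  pcoord 1 0 x' - pcoord 1 0 x = pcoord y' 0 x' - pcoord y 0 x.
Proof.
intros Hx Hx' Hy Hy' Hp.
assert (E : pcoord 1 0 x' - pcoord y' 0 x' = pcoord 1 0 x - pcoord y 0 x).
{ rewrite !pcoord_sub_eq_ln_1_plus_exp by lra; now rewrite Hp. }
lra.
Qed.
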